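(* Let $n\ge3$, $\zeta=2\pi/n$, $m\in[0,n/2]\cap\mathbb{N}$ with $m\ne n/4$, $a>0$, $V$ smooth, and $k\in\{1,\dots,n-1\}$. The matrix $iJB_k$ maps the real subspace $\mathbb{R}\times i\mathbb{R}\subset\mathbb{C}^2$ into itself, and as a real-linear map on this subspace its eigenvalues are $\nu_k^{\pm}=\beta_k\pm\sqrt{\alpha_k^2(1-\phi_k(a))}$. Moreover: (a) if $k\in[1,n-1]\cap\mathbb{N}$ and $\phi_k(a)\in(-\infty,\gamma_k)$, then $\nu_k^+$ is positive; (b) if $k\in[1,n/2)\cap\mathbb{N}$ and $\phi_k(a)\in(\gamma_k,1)$, then $\nu_k^+$ and $\nu_k^-$ are positive.
   Context: $J=\begin{pmatrix}0&-1\\1&0\end{pmatrix}$. $\alpha_k=4\cos(m\zeta)\sin^2(k\zeta/2)$ (nonzero for $k=1,\dots,n-1$ under the assumption $m\ne n/4$), $\beta_k=2\sin(m\zeta)\sin(k\zeta)$, $\phi_k(a)=\frac{2a^2}{\alpha_k}V''(a^2)$, $\gamma_k=1-(\beta_k/\alpha_k)^2$, and $B_k=\mathrm{diag}(2a^2V''(a^2)-\alpha_k,-\alpha_k)+iJ\beta_k=\alpha_k\,\mathrm{diag}(\phi_k(a)-1,-1)+\beta_k\, iJ$. *)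

From HB Require Import structures.
From mathcomp Require Import all_boot all_order all_algebra.
From mathcomp Require Import all_classical all_reals all_analysis.
From mathcomp.real_closed Require Import complex.
Set Implicit Arguments. Unset Strict Implicit. Unset Printing Implicit Defensive.
Import Order.TTheory GRing.Theory Num.Theory.
Local Open Scope ring_scope.
Local Open Scope complex_scope.

Section Defs.
Variable R : realType.

Definition smooth (V : R -> R) : Prop :=
  forall (j : nat) (x : R), derivable (iter j (fun f : R -> R => derive1 f) V) x 1.

Definition d2 (V : R -> R) : R -> R := derive1 (fun y : R => derive1 V y).

Definition zeta (n : nat) : R := 2 * pi / n%:R.

Definition alpha (n m k : nat) : R :=
  4 * cos (m%:R * zeta n) * (sin (k%:R * zeta n / 2)) ^+ 2.

Definition beta (n m k : nat) : R :=
  2 * sin (m%:R * zeta n) * sin (k%:R * zeta n).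

Definition phi (V : R -> R) (n m k : nat) (a : R) : R :=
  2 * a ^+ 2 * d2 V (a ^+ 2) / alpha n m k.

Definition gamma (n m k : nat) : R := 1 - (beta n m k / alpha n m k) ^+ 2.

Definition Jmx : 'M[R[i]]_2 :=
  \matrix_(p < 2, q < 2)
    (if (val p == 0%N) && (val q == 1%N) then -1
     else if (val p == 1%N) && (val q == 0%N) then 1 else 0).

Definition Bk (V : R -> R) (n m k : nat) (a : R) : 'M[R[i]]_2 :=
  diag_mx (\row_(q < 2)
     (if val q == 0%N then (2 * a ^+ 2 * d2 V (a ^+ 2) - alpha n m k)%:C
      else (- alpha n m k)%:C))
  + ('i * (beta n m k)%:C) *: Jmx.

Definition iJBk (V : R -> R) (n m k : nat) (a : R) : 'M[R[i]]_2 :=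
  ('i *: Jmx) *m Bk V n m k a.

Definition in_RxiR (v : 'cV[R[i]]_2) : bool :=
  (complex.Im (v ord0 0) == 0) && (complex.Re (v (@Ordinal 2 1 isT) 0) == 0).

Definition emb (x y : R) : 'cV[R[i]]_2 :=
  \col_(p < 2) (if val p == 0%N then x%:C else y *i).

(* matrix (in the real basis (1,0), (0,i) of R x iR) of the real-linear
   map induced by M on R x iR: column j = coordinates of M applied to the
   j-th basis vector. *)
Definition restr_RxiR (M : 'M[R[i]]_2) : 'M[R]_2 :=
  \matrix_(p < 2, q < 2)
    (let w := M *m emb (if val q == 0%N then 1 else 0)
                        (if val q == 1%N then 1 else 0) in
     if val p == 0%N then complex.Re (w ord0 0) else complex.Im (w (@Ordinal 2 1 isT) 0)).

(* nu_k^{+-} = beta_k +- sqrt(alpha_k^2 (1 - phi_k(a))) (principal complex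
   square root, which is the usual real one for nonnegative arguments) *)
Definition nu_plus (V : R -> R) (n m k : nat) (a : R) : R[i] :=
  (beta n m k)%:C + sqrtC ((alpha n m k ^+ 2 * (1 - phi V n m k a))%:C).
Definition nu_minus (V : R -> R) (n m k : nat) (a : R) : R[i] :=
  (beta n m k)%:C - sqrtC ((alpha n m k ^+ 2 * (1 - phi V n m k a))%:C).

End Defs.

(* In the real basis (1, 0), (0, i) of R x iR, the matrix iJB_k acts by the real
   matrix [[beta, -alpha], [2a^2 V''(a^2) - alpha, beta]]: equal diagonal entries
   and off-diagonal product alpha^2 (1 - phi), so its eigenvalues are
   beta +- sqrt(alpha^2 (1 - phi)).  When alpha <> 0 (i.e. m <> n/4 and 0 < k < n),
   alpha^2 (1 - phi) - beta^2 = alpha^2 (gamma - phi), so phi < gamma puts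
   |beta| below the square root, while gamma < phi < 1 puts the square root
   strictly between 0 and beta, which is nonnegative when 2k < n. *)

From HB Require Import structures.
From mathcomp Require Import all_boot all_order all_algebra.
From mathcomp Require Import all_classical all_reals all_analysis.
From mathcomp.real_closed Require Import complex.
From mathcomp Require Import ring lra zify.
Import Order.TTheory GRing.Theory Num.Theory.
Local Open Scope ring_scope.
Local Open Scope complex_scope.

Section PiFractions.
Variables (R : realType) (p q : nat).
Hypothesis q_gt0 : (0 < q)%N.

Let qR_gt0 : 0 < q%:R :> R. Proof. by rewrite ltr0n. Qed.

Lemma pi_frac_ge0 : 0 <= pi * (p%:R / q%:R) :> R.
Proof. by rewrite mulr_ge0 ?divr_ge0 ?ler0n // ltW // pi_gt0. Qed.

Lemma pi_frac_gt0 : (0 < p)%N -> 0 < pi * (p%:R / q%:R) :> R.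
Proof. by move=> p_gt0; rewrite mulr_gt0 ?divr_gt0 ?ltr0n // pi_gt0. Qed.

Lemma pi_frac_le_pi : (pi * (p%:R / q%:R) <= pi :> R) = (p <= q)%N.
Proof. by rewrite ger_pMr ?pi_gt0 // ler_pdivrMr // mul1r ler_nat. Qed.

Lemma pi_frac_lt_pi : (pi * (p%:R / q%:R) < pi :> R) = (p < q)%N.
Proof. by rewrite gtr_pMr ?pi_gt0 // ltr_pdivrMr // mul1r ltr_nat. Qed.

Lemma pi_frac_eq_pihalf : (pi * (p%:R / q%:R) == pi / 2 :> R) = (2 * p == q)%N.
Proof.
rewrite -{2}[pi]mulr1 -mulrA (inj_eq (mulfI (lt0r_neq0 (@pi_gt0 R)))).
by rewrite eqr_div ?pnatr_eq0 -?lt0n // mul1r mulrC -natrM eqr_nat.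
Qed.

End PiFractions.

Lemma cos_neq0_0_pi (R : realType) (x : R) :
  0 <= x <= pi -> x != pi / 2 -> cos x != 0.
Proof.
move=> x0pi; apply: contraNN => /eqP cos0; apply/eqP/cos_inj; last by rewrite cos_pihalf.
  by rewrite in_itv.
have pi0 := @pi_gt0 R; rewrite in_itv /=; apply/andP; split; lra.
Qed.

Section Coefficients.
Variables (R : realType) (n m k : nat).
Hypothesis n_gt0 : (0 < n)%N.

Lemma mul_zeta (j : nat) : j%:R * zeta R n = pi * ((2 * j)%:R / n%:R).
Proof. by rewrite /zeta natrM; field; rewrite pnatr_eq0 -lt0n. Qed.

Lemma half_mul_zeta (j : nat) : j%:R * zeta R n / 2 = pi * (j%:R / n%:R).
Proof. by rewrite /zeta; field; rewrite pnatr_eq0 -lt0n. Qed.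

Lemma alpha_neq0 : (2 * m <= n)%N -> (4 * m != n)%N -> (0 < k < n)%N ->
  alpha R n m k != 0.
Proof.
move=> m_le m_neq /andP[k_gt0 k_lt].
have cos_neq0 : cos (m%:R * zeta R n) != 0.
  rewrite mul_zeta cos_neq0_0_pi ?pi_frac_ge0 ?pi_frac_le_pi ?pi_frac_eq_pihalf //.
  by rewrite mulnA.
have sin_neq0 : sin (k%:R * zeta R n / 2) != 0.
  by rewrite half_mul_zeta gt_eqF // sin_gt0_pi // pi_frac_gt0 ?pi_frac_lt_pi.
by rewrite /alpha !mulf_neq0 ?expf_neq0 ?pnatr_eq0.
Qed.

Lemma beta_ge0 : (2 * m <= n)%N -> (2 * k <= n)%N -> 0 <= beta R n m k.
Proof.
move=> m_le k_le.
by rewrite /beta !mulr_ge0 ?sin_ge0_pi // mul_zeta pi_frac_ge0 ?pi_frac_le_pi.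
Qed.

End Coefficients.

Local Notation i1 := (@Ordinal 2 1 isT).

Lemma det_mx2 (F : comNzRingType) (A : 'M[F]_2) :
  \det A = A ord0 ord0 * A i1 i1 - A ord0 i1 * A i1 ord0.
Proof.
rewrite (expand_det_row _ ord0) !big_ord_recl big_ord0 /cofactor !det_mx11 !mxE /=.
have -> : lift ord0 (0 : 'I_1) = i1 by apply/val_inj.
have -> : lift i1 (0 : 'I_1) = ord0 by apply/val_inj.
by rewrite expr0 expr1 mul1r mulN1r addr0 mulrN.
Qed.

Lemma eigenvalue_mx2 (F : fieldType) (A : 'M[F]_2) z :
  eigenvalue A z = ((A ord0 ord0 - z) * (A i1 i1 - z) == A ord0 i1 * A i1 ord0).
Proof.
rewrite /eigenvalue /eigenspace kermx_eq0 row_free_unit unitmxE unitfE negbK.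
by rewrite det_mx2 !mxE /= !mulr1n !mulr0n !subr0 subr_eq0.
Qed.

Lemma eigenvalue_mx2_eqdiag (C : numClosedFieldType) (A : 'M[C]_2) z :
  A i1 i1 = A ord0 ord0 ->
  eigenvalue A z <->
  z = A ord0 ord0 + sqrtC (A ord0 i1 * A i1 ord0) \/
  z = A ord0 ord0 - sqrtC (A ord0 i1 * A i1 ord0).
Proof.
move=> eq_diag; rewrite eigenvalue_mx2 eq_diag.
set b := A ord0 ord0; set c := A ord0 i1 * A i1 ord0.
rewrite -expr2 -sqrrN opprB -{1}(sqrtCK c) eqf_sqr !subr_eq.
rewrite [sqrtC c + b]addrC [- sqrtC c + b]addrC.
by split => [/orP[]/eqP|[]->]; auto; rewrite eqxx ?orbT.
Qed.

Section RealSubspace.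
Variable R : realType.

Lemma in_RxiR_mulmx (M : 'M[R[i]]_2) (v : 'cV[R[i]]_2) :
  complex.Im (M ord0 ord0) = 0 -> complex.Re (M ord0 i1) = 0 ->
  complex.Re (M i1 ord0) = 0 -> complex.Im (M i1 i1) = 0 ->
  in_RxiR v -> in_RxiR (M *m v).
Proof.
move=> + + + + /andP[/eqP + /eqP +].
rewrite /in_RxiR !mxE !big_ord_recl !big_ord0.
have -> : lift ord0 ord0 = i1 by apply/val_inj.
case: (M ord0 ord0) (M ord0 i1) (M i1 ord0) (M i1 i1) (v ord0 0) (v i1 0)
  => [? ?] [? ?] [? ?] [? ?] [? ?] [? ?] /= -> -> -> -> -> ->.
by rewrite !(mul0r, mulr0, subr0, addr0) !eqxx.
Qed.

Lemma restr_RxiRE (M : 'M[R[i]]_2) :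
  restr_RxiR M = \matrix_(p < 2, q < 2)
    (if val p == 0%N then
       (if val q == 0%N then complex.Re (M ord0 ord0) else - complex.Im (M ord0 i1))
     else (if val q == 0%N then complex.Im (M i1 ord0) else complex.Re (M i1 i1))).
Proof.
have lift_i1 : lift ord0 ord0 = i1 by apply/val_inj.
apply/matrixP => -[[|[|p]] ?] // [[|[|q]] ?] //;
  rewrite !mxE /= !mxE !big_ord_recl !big_ord0 !mxE /= lift_i1;
  by case: (M _ _) (M _ _) => [? ?] [? ?] /=; ring.
Qed.

End RealSubspace.

Section LinearizedMatrix.
Variables (R : realType) (V : R -> R) (n m k : nat) (a : R).
Local Notation al := (alpha R n m k).
Local Notation be := (beta R n m k).
Local Notation d := (2 * a ^+ 2 * d2 V (a ^+ 2)).

Lemma iJBkE : iJBk V n m k a = \matrix_(p < 2, q < 2)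
  (if val p == 0%N then (if val q == 0%N then be%:C else 'i * al%:C)
   else (if val q == 0%N then 'i * (d - al)%:C else be%:C)).
Proof.
apply/matrixP => -[[|[|p]] ?] // [[|[|q]] ?] //;
  rewrite !mxE !big_ord_recl !big_ord0 !mxE /=;
  by apply/eqP; rewrite eq_complex /=; apply/andP; split; apply/eqP; ring.
Qed.

Lemma iJBk_stable_RxiR (v : 'cV[R[i]]_2) : in_RxiR v -> in_RxiR (iJBk V n m k a *m v).
Proof. by apply: in_RxiR_mulmx; rewrite iJBkE !mxE /=; ring. Qed.

Lemma restr_RxiR_iJBk : restr_RxiR (iJBk V n m k a) = \matrix_(p < 2, q < 2)
  (if val p == 0%N then (if val q == 0%N then be else - al)
   else (if val q == 0%N then d - al else be)).
Proof.
rewrite restr_RxiRE iJBkE; apply/matrixP => -[[|[|p]] ?] // [[|[|q]] ?] //;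
  by rewrite !mxE /=; ring.
Qed.

End LinearizedMatrix.

Section SquareRoots.
Variable R : rcfType.

Lemma sqrtC_realE (c : R) : 0 <= c -> sqrtC c%:C = (Num.sqrt c)%:C.
Proof. by move=> c_ge0; rewrite -{1}(sqr_sqrtr c_ge0) rmorphXn sqrCK // ler0c sqrtr_ge0. Qed.

Lemma addr_sqrt_gt0 (b c : R) : b ^+ 2 < c -> 0 < b + Num.sqrt c.
Proof.
move=> lt_bc; have : `|b| < Num.sqrt c by rewrite -sqrtr_sqr ltr_sqrt // (le_lt_trans (sqr_ge0 b)).
by have := ler_norm (- b); rewrite normrN; lra.
Qed.

Lemma subr_sqrt_gt0 (b c : R) : 0 <= b -> 0 <= c < b ^+ 2 -> 0 < b - Num.sqrt c.
Proof.
move=> b_ge0 /andP[c_ge0 lt_cb].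
by rewrite subr_gt0 -(ger0_norm b_ge0) -sqrtr_sqr ltr_sqrt // (le_lt_trans c_ge0).
Qed.

End SquareRoots.

(* No hypothesis on x: at x = 0 both sides vanish since y / 0 = 0. *)
Lemma sqr_mul_1subdiv (F : fieldType) (x y : F) : x ^+ 2 * (1 - y / x) = - x * (y - x).
Proof. by have [->|x_neq0] := eqVneq x 0; [rewrite expr0n !mul0r oppr0 mul0r | field]. Qed.

Section Spectrum.
Variables (R : realType) (V : R -> R) (n m k : nat) (a : R).
Local Notation al := (alpha R n m k).
Local Notation be := (beta R n m k).
Local Notation ph := (phi V n m k a).
Let c := al ^+ 2 * (1 - ph).

Lemma eigenvalue_restr_iJBk (z : R[i]) :
  eigenvalue (map_mx (fun x : R => x%:C) (restr_RxiR (iJBk V n m k a))) z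
  <-> z = nu_plus V n m k a \/ z = nu_minus V n m k a.
Proof.
rewrite eigenvalue_mx2_eqdiag restr_RxiR_iJBk !mxE //=.
by rewrite -rmorphM /= -sqr_mul_1subdiv.
Qed.

Lemma sqr_alpha_sub_sqr_beta : al != 0 -> c - be ^+ 2 = al ^+ 2 * (gamma R n m k - ph).
Proof. by move=> al_neq0; rewrite /c /gamma /phi; field. Qed.

Lemma nu_plus_gt0 : al != 0 -> ph < gamma R n m k -> 0 < nu_plus V n m k a.
Proof.
move=> al_neq0 lt_phi_gamma.
have lt_be_c : be ^+ 2 < c.
  by rewrite -subr_gt0 sqr_alpha_sub_sqr_beta // mulr_gt0 ?subr_gt0 ?exprn_even_gt0.
have c_ge0 : 0 <= c by apply/ltW/(le_lt_trans (sqr_ge0 be)).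
by rewrite /nu_plus -/c sqrtC_realE // -rmorphD ltcR addr_sqrt_gt0.
Qed.

Lemma nu_gt0 : al != 0 -> 0 <= be -> gamma R n m k < ph < 1 ->
  0 < nu_plus V n m k a /\ 0 < nu_minus V n m k a.
Proof.
move=> al_neq0 be_ge0 /andP[lt_gamma_phi lt_phi1].
have lt_c_be : c < be ^+ 2.
  by rewrite -subr_lt0 sqr_alpha_sub_sqr_beta // pmulr_rlt0 ?subr_lt0 ?exprn_even_gt0.
have c_ge0 : 0 <= c by rewrite mulr_ge0 ?sqr_ge0 // subr_ge0 ltW.
have nu_minus_gt0 : 0 < be - Num.sqrt c by rewrite subr_sqrt_gt0 ?c_ge0.
rewrite /nu_plus /nu_minus -/c sqrtC_realE // -rmorphD -rmorphB !ltcR.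
by split=> //; have := sqrtr_ge0 c; lra.
Qed.

End Spectrum.

Theorem lemma1 (R : realType) (n m k : nat) (a : R) (V : R -> R) :
  (3 <= n)%N -> (2 * m <= n)%N -> (4 * m != n)%N ->
  0 < a -> smooth V -> (1 <= k <= n - 1)%N ->
  (forall v : 'cV[R[i]]_2, in_RxiR v -> in_RxiR (iJBk V n m k a *m v)) /\
  (forall z : R[i],
     eigenvalue (map_mx (fun x : R => x%:C) (restr_RxiR (iJBk V n m k a))) z
     <-> (z = nu_plus V n m k a \/ z = nu_minus V n m k a)) /\
  (phi V n m k a < gamma R n m k -> 0 < nu_plus V n m k a) /\
  ((2 * k < n)%N -> gamma R n m k < phi V n m k a < 1 ->
     0 < nu_plus V n m k a /\ 0 < nu_minus V n m k a).
Proof.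
move=> n_ge3 m_le m_neq _ _ k_range.
have n_gt0 : (0 < n)%N by lia.
have al_neq0 : alpha R n m k != 0 by apply: alpha_neq0 => //; lia.
split; first exact: iJBk_stable_RxiR.
split; first exact: eigenvalue_restr_iJBk.
split; first exact: nu_plus_gt0.
by move=> k_lt; apply: nu_gt0 => //; apply: beta_ge0 => //; lia.
Qed.
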